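(* There exist infinitely many (combinatorially distinct) triangulations of $S^2$ which cannot be realized as the Delaunay triangulation, with respect to the cone points, of any Euclidean metric on $S^2$ with positively curved cone points.
   Context: A Euclidean metric on $S^2$ with cone points is a flat metric away from finitely many points, near each of which it is a Euclidean cone of some cone angle; a cone point is positively curved if its cone angle is less than $2\pi$. A triangulation $T$ is realized as the Delaunay triangulation with respect to the cone points if the vertex set corresponds to the set of distinguished points containing the cone points and $T$ is combinatorially equivalent to the Delaunay triangulation of the metric with respect to these points (a geodesic triangulation in which, for each edge $AB$ lying in triangles $ABC$ and $ABD$, the sum of the angles at $C$ and $D$ is at most $\pi$). *)

From HB Require Import structures.
From mathcomp Require Import all_boot all_order all_algebra.
From mathcomp Require Import all_classical all_reals.
From mathcomp Require Import trigo.
From mathcomp Require Import Rstruct.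

Set Implicit Arguments.
Unset Strict Implicit.
Unset Printing Implicit Defensive.

Import Order.TTheory GRing.Theory Num.Theory.
Local Open Scope ring_scope.
Notation R := Rdefinitions.R.

Section Triangulations.
Variable n : nat.
Implicit Types (F : {set {set 'I_n}}) (v : 'I_n) (e f g : {set 'I_n}).

Definition edges F : {set {set 'I_n}} :=
  [set e : {set 'I_n} | (#|e| == 2)%N && [exists f in F, e \subset f]].

Definition face_adj F : rel {set 'I_n} :=
  fun f g => [&& f \in F, g \in F, f != g & #|f :&: g| == 2]%N.

Definition star_adj F v : rel {set 'I_n} :=
  fun f g => [&& face_adj F f g, v \in f & v \in g].

(* F is a (simplicial) triangulation of the 2-sphere:
   - all faces are triangles, every vertex is used;
   - every edge lies in exactly two triangles;
   - the link of every vertex is a single cycle (star connected);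
   - the complex is connected;
   - Euler characteristic V - E + F = 2.
   By the classification of closed surfaces this characterises the
   simplicial complexes whose realization is homeomorphic to S^2. *)
Definition is_S2_triangulation F : Prop :=
  [/\ (forall f, f \in F -> #|f| = 3)%N,
      (forall v, exists2 f, f \in F & v \in f),
      (forall e, e \in edges F -> #|[set f in F | e \subset f]| = 2)%N,
      (forall v f g, f \in F -> g \in F -> v \in f -> v \in g ->
          connect (star_adj F v) f g) &
      (forall f g, f \in F -> g \in F -> connect (face_adj F) f g) /\
      (n + #|F| = #|edges F| + 2)%N ].

(* Euclidean cone metrics obtained by gluing Euclidean triangles:       *)
(* an edge-length function l on the edges of F.                        *)

Variable l : {set 'I_n} -> R.

(* the angle at vertex v of the Euclidean triangle f (law of cosines);
   the two edges of f through v have squared lengths summed and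
   lengths multiplied, the opposite edge is f :\ v *)
Definition corner_angle v f : R :=
  acos ((\sum_(e : {set 'I_n} | [&& e \subset f, #|e| == 2%N & v \in e]) l e ^+ 2
          - l (f :\ v) ^+ 2)
        / (2 * \prod_(e : {set 'I_n} | [&& e \subset f, #|e| == 2%N & v \in e]) l e)).

Definition nondegenerate_lengths F : Prop :=
  (forall e, e \in edges F -> 0 < l e) /\
  (forall f v, f \in F -> v \in f ->
     l (f :\ v) < \sum_(e : {set 'I_n} | [&& e \subset f, #|e| == 2%N & v \in e]) l e).

Definition cone_angle F v : R := \sum_(f in F | v \in f) corner_angle v f.

(* all cone points positively curved: every vertex has cone angle
   <= 2 pi (vertices with angle exactly 2 pi are non-singular
   distinguished points, the cone points are those with angle < 2 pi) *)
Definition positively_curved F : Prop :=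
  forall v, cone_angle F v <= 2 * pi.

Definition delaunay F : Prop :=
  forall f g, face_adj F f g ->
    \sum_(c in f :\: g) corner_angle c f + \sum_(d in g :\: f) corner_angle d g <= pi.

End Triangulations.

Definition delaunay_realizable (n : nat) (F : {set {set 'I_n}}) : Prop :=
  exists l : {set 'I_n} -> R,
    [/\ nondegenerate_lengths l F, positively_curved l F & delaunay l F].

Definition comb_equiv (n m : nat) (F : {set {set 'I_n}}) (G : {set {set 'I_m}}) : Prop :=
  exists sigma : 'I_n -> 'I_m,
    bijective sigma /\ [set sigma @: f | f : {set 'I_n} in F] = G.

(* Every triangle of a Euclidean cone metric has angle sum [pi].  Let [S] be a set
   of vertices meeting every triangle in exactly one vertex.  The edge of a
   triangle opposite its [S]-vertex avoids [S], so the other triangle on that edge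
   also has its [S]-vertex opposite it, and the Delaunay condition bounds the two
   opposite angles by [pi] in total: the angles at [S]-vertices add up to at most
   [pi #|F| / 2].  The other angles add up to the cone angles at the vertices
   outside [S], each at most [2 pi].  Hence [#|F| <= 4 #|~: S|].  Stellarly
   subdividing every face of the bipyramid over an [m]-gon yields a triangulated
   sphere with [6 m] faces in which the new vertices form such an [S] with
   [m + 2] vertices outside it, violating the bound as soon as [m >= 5]. *)

From HB Require Import structures.
From mathcomp Require Import all_boot all_order all_algebra.
From mathcomp Require Import all_classical all_reals.
From mathcomp Require Import trigo Rstruct.
From mathcomp Require Import ring lra zify.
Import Order.TTheory GRing.Theory Num.Theory.

Set Implicit Arguments.
Unset Strict Implicit.
Unset Printing Implicit Defensive.

Lemma card2_sub_set3 (T : finType) (e : {set T}) a b c :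
  #|e| = 2 -> e \subset [set a; b; c] ->
  [\/ e = [set a; b], e = [set a; c] | e = [set b; c]].
Proof.
move=> /eqP /cards2P [x [y [xy ->]]].
rewrite finset.subUset !finset.sub1set !inE -!orbA => /andP[hx hy].
case/or3P: hx => /eqP ?; case/or3P: hy => /eqP ?; subst; rewrite ?eqxx // in xy.
- by constructor 1.
- by constructor 2.
- by constructor 1; rewrite finset.setUC.
- by constructor 3.
- by constructor 2; rewrite finset.setUC.
- by constructor 3; rewrite finset.setUC.
Qed.

Lemma card_set3 (T : finType) (a b c : T) :
  a != b -> a != c -> b != c -> #|[set a; b; c]| = 3.
Proof.
by move=> ab ac bc; rewrite -finset.setUA cardsU1 cardsU1 cards1 !inE negb_or ab ac bc.
Qed.

Section ClosedSurface.
Variables (n : nat) (F : {set {set 'I_n}}).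
Implicit Types (f g e : {set 'I_n}) (v : 'I_n).

Lemma face_adj_sym : symmetric (face_adj F).
Proof.
move=> f g; rewrite /face_adj; apply/idP/idP => /and4P[fF gF fg fIg];
by rewrite fF gF eq_sym fg finset.setIC.
Qed.

Lemma star_adj_sym v : symmetric (star_adj F v).
Proof. by move=> f g; rewrite /star_adj face_adj_sym [(v \in f) && _]andbC. Qed.

Lemma face_adj_common_pair f g v w : f \in F -> g \in F -> f != g ->
  #|f| = 3 -> #|g| = 3 -> v != w -> v \in f -> v \in g -> w \in f -> w \in g ->
  face_adj F f g.
Proof.
move=> fF gF fg f3 g3 vw vf vg wf wg; rewrite /face_adj fF gF fg eqn_leq /=.
have -> : 2 <= #|f :&: g|.
  have vw_fg : [set v; w] \subset f :&: g.
    by rewrite finset.subUset !finset.sub1set !inE vf vg wf wg.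
  by have := subset_leq_card vw_fg; rewrite cards2 vw.
rewrite andbT -ltnS -f3; apply: proper_card; rewrite properE subsetIl /=.
apply: contra fg => /(fintype.subset_trans)/(_ (subsetIr f g)) fsubg.
by rewrite eqEcard fsubg f3 g3.
Qed.

Hypothesis card_face : {in F, forall f, #|f| = 3}.
Hypothesis card_faces_at_edge : forall e, e \in edges F -> #|[set f in F | e \subset f]| = 2.

Lemma card_edges : 2 * #|edges F| = 3 * #|F|.
Proof.
have card_sub_sum (T : finType) (A : {set T}) (P : pred T) :
    #|[set x in A | P x]| = \sum_(x in A) (P x : nat).
  by rewrite -sum1dep_card big_mkcondr; apply: eq_bigr => x _; case: (P x).
have edges_at_face f : f \in F -> #|[set e in edges F | e \subset f]| = 3.
  move=> fF; rewrite -[3]/'C(3, 2) -(card_face fF) -cards_draws.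
  apply: eq_card => e; rewrite !inE andbC; case: (boolP (e \subset f)) => //= ef.
  by apply: andb_idr => _; apply/existsP; exists f; rewrite fF.
have -> : 2 * #|edges F| = \sum_(e in edges F) #|[set f in F | e \subset f]|.
  by rewrite mulnC -sum_nat_const; apply: eq_bigr => e /card_faces_at_edge.
have -> : 3 * #|F| = \sum_(f in F) #|[set e in edges F | e \subset f]|.
  by rewrite mulnC -sum_nat_const; apply: eq_bigr => f /edges_at_face.
under eq_bigr => e _ do rewrite card_sub_sum.
under [RHS]eq_bigr => f _ do rewrite card_sub_sum.
exact: exchange_big.
Qed.
End ClosedSurface.

Local Open Scope ring_scope.

Lemma ler_acos (x y : R) : -1 <= x <= 1 -> -1 <= y <= 1 -> x <= y -> acos y <= acos x.
Proof.
move=> hx hy le_xy; rewrite leNgt; apply/negP => lt_xy.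
have acos_itv (z : R) : -1 <= z <= 1 -> acos z \in `[0, pi].
  by move=> hz; rewrite in_itv /= acos_ge0 ?acos_lepi.
have := ltr_cos (acos_itv _ hx) (acos_itv _ hy).
by rewrite !acosK ?in_itv //= lt_xy ltNge le_xy.
Qed.

Lemma triangle_angle_sum (A B C : R) : A < B + C -> B < A + C -> C < A + B ->
  acos ((B ^+ 2 + C ^+ 2 - A ^+ 2) / (2 * B * C))
  + acos ((A ^+ 2 + C ^+ 2 - B ^+ 2) / (2 * A * C))
  + acos ((A ^+ 2 + B ^+ 2 - C ^+ 2) / (2 * A * B)) = pi.
Proof.
move=> hA hB hC.
set x := _ / (2 * B * C); set y := _ / (2 * A * C); set z := _ / (2 * A * B).
have [A0 same0 C0] : [/\ 0 < A, 0 < B & 0 < C] by split; lra.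
have [nA nB nC] : [/\ A != 0, B != 0 & C != 0] by rewrite !gt_eqF.
(* [heron] is 16 times the squared area of the triangle (Heron's formula). *)
set heron := (A + B + C) * (- A + B + C) * (A - B + C) * (A + B - C).
have heron_gt0 : 0 < heron by rewrite !mulr_gt0 //; lra.
have cos_bound (u D : R) : 0 < D -> 1 - u ^+ 2 = heron / D -> -1 <= u <= 1.
  move=> D0 hu; have : 0 < 1 - u ^+ 2 by rewrite hu divr_gt0.
  by move=> ?; apply/andP; split; nra.
have x_bound : -1 <= x <= 1.
  apply: (cos_bound _ (4 * B ^+ 2 * C ^+ 2)); first by rewrite !mulr_gt0 ?exprn_gt0.
  by rewrite /x /heron; field; rewrite nB nC.
have y_bound : -1 <= y <= 1.
  apply: (cos_bound _ (4 * A ^+ 2 * C ^+ 2)); first by rewrite !mulr_gt0 ?exprn_gt0.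
  by rewrite /y /heron; field; rewrite nA nC.
have z_bound : -1 <= z <= 1.
  apply: (cos_bound _ (4 * A ^+ 2 * B ^+ 2)); first by rewrite !mulr_gt0 ?exprn_gt0.
  by rewrite /z /heron; field; rewrite nA nB.
have xy_ge0 : 0 <= x + y.
  have -> : x + y = (A + B) * ((C - (A - B)) * (C + (A - B))) / (2 * A * B * C).
    by rewrite /x /y; field; rewrite nA nB nC.
  by rewrite divr_ge0 ?mulr_ge0 //; lra.
have zxy_ge0 : 0 <= z + x * y.
  have -> : z + x * y = heron / (4 * A * B * C ^+ 2).
    by rewrite /z /x /y /heron; field; rewrite nA nB nC.
  by rewrite divr_ge0 ?mulr_ge0 //; lra.
have sin_prod : Num.sqrt ((1 - x ^+ 2) * (1 - y ^+ 2)) = z + x * y.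
  have -> : (1 - x ^+ 2) * (1 - y ^+ 2) = (z + x * y) ^+ 2.
    by rewrite /x /y /z; field; rewrite nA nB nC.
  by rewrite sqrtr_sqr ger0_norm.
have sum_le_pi : acos x + acos y <= pi.
  have := @ler_acos (- y) x _ x_bound; rewrite acosN //.
  by move=> le; have := le ltac:(lra) ltac:(lra); lra.
suff -> : acos z = pi - (acos x + acos y) by lra.
have -> : z = cos (pi - (acos x + acos y)).
  rewrite cosB cospi sinpi trigo.cosD !acosK ?in_itv // !sin_acos //.
  by rewrite -sqrtrM ?sin_prod; [ring | nra].
by rewrite cosK // in_itv /= subr_ge0 sum_le_pi gerBl addr_ge0 ?acos_ge0.
Qed.

Section CornerAngles.
Variable n : nat.
Implicit Types (a b c : 'I_n) (F : {set {set 'I_n}}) (f : {set 'I_n}).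

Lemma set3_rot a b c : [set a; b; c] = [set b; c; a].
Proof. by apply/setP => x; rewrite !inE [RHS]orbC orbA. Qed.

Lemma set3_card3 f : #|f| = 3 ->
  exists a b c, [/\ a != b, a != c, b != c & f = [set a; b; c]].
Proof.
move=> f3; have [a fa] : exists a, a \in f by apply/set0Pn; rewrite -card_gt0 f3.
have /cards2P [b [c [bc fDa]]] : #|f :\ a| == 2 by move: f3; rewrite (cardsD1 a) fa add1n => -[->].
have [ab ac] : a != b /\ a != c.
  by split; apply/eqP => ea; have := setD11 a f; rewrite fDa ea !inE eqxx ?orbT.
by exists a, b, c; split => //; rewrite -finset.setUA -fDa finset.setD1K.
Qed.

Lemma set3D1 a b c : a != b -> a != c -> [set a; b; c] :\ a = [set b; c].
Proof. by move=> ab ac; rewrite -finset.setUA setU1K // !inE negb_or ab ac. Qed.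

Lemma edges_through_set3 a b c (e : {set 'I_n}) : a != b -> a != c -> b != c ->
  [&& e \subset [set a; b; c], #|e| == 2 & a \in e] = (e == [set a; b]) || (e == [set a; c]).
Proof.
move=> ab ac bc; apply/idP/idP; last first.
  case/orP => /eqP ->; rewrite cards2 ?ab ?ac !inE eqxx finset.subUset !finset.sub1set;
  by rewrite !inE !eqxx ?orbT.
case/and3P => sub /cards2P [x [y [xy exy]]]; move: sub; rewrite exy.
rewrite finset.subUset !finset.sub1set !inE -!orbA => /andP[hx hy].
case/orP => /eqP ea; subst a.
  by case/or3P: hy xy => /eqP ->; rewrite ?eqxx ?orbT.
by rewrite finset.setUC; case/or3P: hx xy => /eqP ->; rewrite ?eqxx ?orbT // eq_sym.
Qed.

Lemma big_edges_through_set3 (T : Type) (idx : T) (op : Monoid.com_law idx)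
    (h : {set 'I_n} -> T) a b c : a != b -> a != c -> b != c ->
  \big[op/idx]_(e : {set 'I_n} | [&& e \subset [set a; b; c], #|e| == 2 & a \in e]) h e
  = op (h [set a; b]) (h [set a; c]).
Proof.
move=> ab ac bc.
rewrite (eq_bigl (mem [set [set a; b]; [set a; c]])) => [|e]; last first.
  by rewrite edges_through_set3 // !inE.
rewrite big_setU1 ?big_set1 // !inE; apply/eqP => /setP /(_ b).
by rewrite !inE eqxx orbT eq_sym (negbTE ab) (negbTE bc).
Qed.

Variable l : {set 'I_n} -> R.

Lemma corner_angle_set3 a b c : a != b -> a != c -> b != c ->
  corner_angle l a [set a; b; c] =
  acos ((l [set a; b] ^+ 2 + l [set a; c] ^+ 2 - l [set b; c] ^+ 2)
        / (2 * (l [set a; b] * l [set a; c]))).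
Proof.
by move=> ab ac bc; rewrite /corner_angle set3D1 // !big_edges_through_set3.
Qed.

Lemma nondegenerate_set3 F a b c : nondegenerate_lengths l F -> [set a; b; c] \in F ->
  a != b -> a != c -> b != c -> l [set b; c] < l [set a; b] + l [set a; c].
Proof.
move=> [_ ineq] abcF ab ac bc.
by have := ineq _ a abcF; rewrite !inE eqxx set3D1 // big_edges_through_set3 //; apply.
Qed.

Lemma face_angle_sum F f : nondegenerate_lengths l F -> f \in F -> #|f| = 3 ->
  \sum_(v in f) corner_angle l v f = pi.
Proof.
move=> nd fF /set3_card3 [a [b [c [ab ac bc ef]]]]; subst f.
have [ba ca cb] : [/\ b != a, c != a & c != b] by rewrite !(eq_sym _ a) (eq_sym c).
have rb : [set a; b; c] = [set b; c; a] := set3_rot a b c.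
have rc : [set a; b; c] = [set c; a; b] by rewrite rb set3_rot.
have ang_a := corner_angle_set3 ab ac bc.
have ang_b := corner_angle_set3 bc ba ca; rewrite -rb in ang_b.
have ang_c := corner_angle_set3 ca cb ab; rewrite -rc in ang_c.
have ineq_a := nondegenerate_set3 nd fF ab ac bc.
have ineq_b := nondegenerate_set3 nd (etrans (congr1 _ (esym rb)) fF) bc ba ca.
have ineq_c := nondegenerate_set3 nd (etrans (congr1 _ (esym rc)) fF) ca cb ab.
rewrite -finset.setUA big_setU1 ?big_setU1 ?big_set1 /= ?inE ?negb_or ?ab ?ac ?bc //.
rewrite finset.setUA ang_a ang_b ang_c.
move: ineq_a ineq_b ineq_c.
rewrite -![[set b; a]]finset.setUC -![[set c; a]]finset.setUC -![[set c; b]]finset.setUC.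
set A := l [set b; c]; set B := l [set a; c]; set C := l [set a; b] => ineq_a ineq_b ineq_c.
rewrite -(@triangle_angle_sum A B C) ?addrA; try lra.
by congr (acos _ + acos _ + acos _); congr (_ / _); ring.
Qed.

End CornerAngles.

Section FaceTransversal.
Variables (n : nat) (F : {set {set 'I_n}}) (S : {set 'I_n}).
Implicit Types (f g : {set 'I_n}).
Hypothesis card_face : {in F, forall f, #|f| = 3}%N.
Hypothesis card_faces_at_edge :
  forall e, e \in edges F -> #|[set f in F | e \subset f]| = 2%N.
Hypothesis transversal : {in F, forall f, #|f :&: S| = 1}%N.

Lemma card_base f : f \in F -> #|f :\: S| = 2%N.
Proof. by move=> fF; have := cardsID S f; rewrite (transversal fF) (card_face fF) => -[]. Qed.

Lemma base_edge f : f \in F -> f :\: S \in edges F.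
Proof.
move=> fF; rewrite inE card_base // eqxx; apply/existsP; exists f.
by rewrite fF subsetDl.
Qed.

Lemma base_uniq f g : f \in F -> g \in F -> f :\: S \subset g -> f :\: S = g :\: S.
Proof.
move=> fF gF sub; apply/eqP; rewrite eqEcard !card_base // leqnn andbT.
apply/fintype.subsetP => x; rewrite !inE => /andP[xS xf].
by rewrite xS (fintype.subsetP sub) // !inE xS.
Qed.

(* [f :\: S] is the edge of [f] opposite its [S]-vertex, and [across f g] says that
   [g] is the other face on that edge. *)
Definition across f g := [&& f \in F, g \in F, f != g & f :\: S \subset g].

Lemma acrossC : symmetric across.
Proof.
suff imp f g : across f g -> across g f by move=> f g; apply/idP/idP => /imp.
case/and4P => fF gF fg sub; rewrite /across gF fF eq_sym fg.
by rewrite -(base_uniq fF gF sub) subsetDl.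
Qed.

Lemma card_across f : f \in F -> #|[set g | across f g]| = 1%N.
Proof.
move=> fF; have := card_faces_at_edge (base_edge fF).
rewrite (cardsD1 f [set g in F | _]) !inE fF subsetDl add1n => -[<-]; apply: eq_card => g.
by rewrite !inE /across fF /= eq_sym andbCA.
Qed.

Lemma across_setD f g : across f g -> f :\: g = f :&: S.
Proof.
case/and4P => fF gF fg sub; apply/eqP; rewrite eqEcard (transversal fF).
have -> : f :\: g \subset f :&: S.
  apply/fintype.subsetP => x; rewrite !inE => /andP[xg xf]; rewrite xf /=.
  by apply: contraNT xg => xS; rewrite (fintype.subsetP sub) // !inE xS.
rewrite card_gt0; apply: contra fg; rewrite finset.setD_eq0 => fsubg.
by rewrite eqEcard fsubg (card_face fF) (card_face gF).
Qed.

Lemma across_adj f g : across f g -> face_adj F f g.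
Proof.
move=> fg; have := fg; case/and4P => fF gF neq _.
rewrite /face_adj fF gF neq; apply/eqP.
by have := cardsID g f; rewrite (across_setD fg) (transversal fF) (card_face fF) addn1 => -[].
Qed.

Lemma sum_across (h : {set 'I_n} -> R) :
  \sum_(f in F) h f = \sum_(p | across p.1 p.2) h p.1.
Proof.
rewrite -(pair_big_dep xpredT across (fun f _ => h f)) [RHS](bigID (mem F)) /=.
rewrite [X in _ + X]big1 ?addr0 => [|f fF]; last first.
  by rewrite big_pred0 // => g; rewrite /across (negbTE fF).
by apply: eq_bigr => f fF; rewrite sumr_const -cardsE card_across.
Qed.

Section Realization.
Variable l : {set 'I_n} -> R.
Hypotheses (nd : nondegenerate_lengths l F) (pc : positively_curved l F) (dl : delaunay l F).

Lemma across_apex_angles f g : across f g ->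
  \sum_(v in f | v \in S) corner_angle l v f + \sum_(v in g | v \in S) corner_angle l v g <= pi.
Proof.
move=> fg; have gf : across g f by rewrite acrossC.
have := dl (across_adj fg); rewrite (across_setD fg) (across_setD gf).
under eq_bigl do rewrite finset.in_setI.
by under [X in _ + X <= _]eq_bigl do rewrite finset.in_setI.
Qed.

Lemma sum_apex_angles_le :
  (\sum_(f in F) \sum_(v in f | v \in S) corner_angle l v f) *+ 2 <= pi *+ #|F|.
Proof.
set apex := fun f => \sum_(v in f | v \in S) corner_angle l v f.
have swap_across : \sum_(p | across p.1 p.2) apex p.1 = \sum_(p | across p.1 p.2) apex p.2.
  have swapK : involutive (fun p : {set 'I_n} * {set 'I_n} => (p.2, p.1)) by case.
  rewrite (reindex_inj (inv_inj swapK)) /=.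
  by apply: eq_bigl => p; rewrite acrossC.
rewrite mulr2n -sumr_const !sum_across {2}swap_across -big_split /=.
by apply: ler_sum => p; apply: across_apex_angles.
Qed.

Lemma sum_base_angles_le :
  \sum_(f in F) \sum_(v in f | v \notin S) corner_angle l v f <= (2 * pi) *+ #|~: S|.
Proof.
rewrite -sumr_const (exchange_big_dep (fun v => v \in ~: S)) => [|f v _ /andP[_]]; last first.
  by rewrite inE.
apply: ler_sum => v /[!inE] vS.
have -> : \sum_(f in F | (v \in f) && (v \notin S)) corner_angle l v f = cone_angle l F v.
  by apply: eq_bigl => f; rewrite vS andbT.
exact: pc.
Qed.

Lemma card_faces_le : (#|F| <= 4 * #|~: S|)%N.
Proof.
have total : \sum_(f in F) \sum_(v in f | v \in S) corner_angle l v f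
           + \sum_(f in F) \sum_(v in f | v \notin S) corner_angle l v f = pi *+ #|F|.
  rewrite -big_split -sumr_const; apply: eq_bigr => f fF /=.
  by rewrite -(face_angle_sum nd fF (card_face fF)) [RHS](bigID (mem S)).
have count (a b p : R) (k m : nat) : 0 < p ->
    a + b = p *+ k -> a *+ 2 <= p *+ k -> b <= (2 * p) *+ m -> (k <= 4 * m)%N.
  move=> p0; rewrite -(mulr_natr a) -(mulr_natr p) -(mulr_natr (2 * p)) => ab a2 bm.
  by rewrite -(ler_nat R) natrM -(ler_pM2l p0); nra.
exact: count (pi_gt0 R) total sum_apex_angles_le sum_base_angles_le.
Qed.
End Realization.

Lemma realizable_card_faces_le : delaunay_realizable F -> (#|F| <= 4 * #|~: S|)%N.
Proof. by case=> l [nd pc dl]; apply: (card_faces_le nd pc dl). Qed.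

End FaceTransversal.

Local Close Scope ring_scope.

Section StackedBipyramid.
Variable k : nat.

(* Vertices [0] and [1] are the poles, [equator i] for [i < gon] are the vertices of
   the equatorial [gon]-gon, and [apex b i] is the vertex added inside the face
   [pole b, equator i, equator (next i)] of the bipyramid.  The label [(b, i, j)]
   names the [j]-th of the three triangles into which that face is subdivided. *)
Definition gon := k.+4.+1.
Definition nverts := (3 * gon).+2.
Definition vtx (a : nat) : 'I_nverts := @inord (3 * gon).+1 a.
Definition pole (b : bool) : nat := if b then 1 else 0.
Definition equator (i : nat) : nat := 2 + i.
Definition apex (b : bool) (i : nat) : nat := 2 + gon + (if b then gon else 0) + i.
Definition next (i : nat) : nat := if i.+1 == gon then 0 else i.+1.
Definition label := (bool * 'I_gon * 'I_3)%type.

Definition o0 : 'I_3 := @Ordinal 3 0 isT.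
Definition o1 : 'I_3 := @Ordinal 3 1 isT.
Definition o2 : 'I_3 := @Ordinal 3 2 isT.

Definition corners (l : label) : nat * nat * nat :=
  let: (b, i, j) := l in
  match val j with
  | 0 => (pole b, equator i, apex b i)
  | 1 => (pole b, equator (next i), apex b i)
  | _ => (equator i, equator (next i), apex b i)
  end.
Definition face (l : label) : {set 'I_nverts} :=
  [set vtx (corners l).1.1; vtx (corners l).1.2; vtx (corners l).2].
Definition stacked_bipyramid : {set {set 'I_nverts}} := [set face l | l : label].

Local Notation star_at v := (star_adj stacked_bipyramid v).
Local Notation adjacent := (face_adj stacked_bipyramid).

Lemma vtxK a : a < nverts -> val (vtx a) = a.
Proof. by move=> h; rewrite /vtx /= inordK. Qed.

Lemma next_lt i : i < gon -> next i < gon.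
Proof. rewrite /next /gon; case: eqP; lia. Qed.

Lemma corners_lt (l : label) :
  [/\ (corners l).1.1 < nverts, (corners l).1.2 < nverts & (corners l).2 < nverts].
Proof.
case: l => [[b i] [[|[|[|j]]] hj]] //=; have := ltn_ord i; have := next_lt (ltn_ord i);
rewrite /nverts /pole /equator /apex /next /gon; case: b; case: eqP => ? /= *; split; lia.
Qed.

Lemma mem_face (v : 'I_nverts) l :
  (v \in face l) = [|| val v == (corners l).1.1, val v == (corners l).1.2 | val v == (corners l).2].
Proof.
have [h1 h2 h3] := corners_lt l.
by rewrite /face !inE -!val_eqE !vtxK // orbA.
Qed.

Lemma mem_face_vtx a l : a < nverts ->
  (vtx a \in face l) = [|| a == (corners l).1.1, a == (corners l).1.2 | a == (corners l).2].
Proof. by move=> h; rewrite mem_face vtxK. Qed.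

Lemma next_spec (i : 'I_gon) :
  (i.+1 = gon /\ next i = 0) \/ (i.+1 < gon /\ next i = i.+1).
Proof. rewrite /next; have := ltn_ord i; case: eqP; lia. Qed.

Lemma label_eq b (i i' : 'I_gon) (j j' : 'I_3) :
  nat_of_ord i = nat_of_ord i' -> nat_of_ord j = nat_of_ord j' -> ((b, i, j) : label) = (b, i', j').
Proof. by move=> /val_inj -> /val_inj ->. Qed.

Lemma gonE : gon = k + 5. Proof. by rewrite /gon; lia. Qed.

Lemma label_neq b b' (i i' : 'I_gon) (j j' : 'I_3) :
  (b != b') || (nat_of_ord j != nat_of_ord j') -> ((b, i, j) : label) != (b', i', j').
Proof.
move=> H; apply/negP => /eqP E; move: H; case: E => -> _ ->; by rewrite !eqxx.
Qed.

Ltac case_label l := let b := fresh "b" in let i := fresh "i" in let j := fresh "j" in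
  let hj := fresh "hj" in
  case: l => [[b i] [[|[|[|j]]] hj]] //; have := ltn_ord i; have := next_spec i; case: b.

Ltac index_facts i := have := ltn_ord i; have := next_spec i.

Ltac solve_index :=
  rewrite /=; unfold pole, equator, apex, nverts, o0, o1, o2; rewrite /=;
  intros; have := gonE; intros;
  first [ lia | exfalso; lia | (apply: label_eq; rewrite /=; lia)
        | (apply/eqP; apply: label_eq; rewrite /=; lia)
        | (apply/orP; left; apply/eqP; apply: label_eq; rewrite /=; lia)
        | (apply/orP; right; apply/eqP; apply: label_eq; rewrite /=; lia) ].

Lemma face_inj : injective face.
Proof.
move=> l l' E.
have [h1 h2 h3] := corners_lt l.
have m1 : vtx (corners l).1.1 \in face l' by rewrite -E /face !inE eqxx.
have m2 : vtx (corners l).1.2 \in face l' by rewrite -E /face !inE eqxx orbT.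
have m3 : vtx (corners l).2 \in face l' by rewrite -E /face !inE eqxx !orbT.
rewrite !mem_face_vtx // in m1 m2 m3.
clear E; move: m1 m2 m3 h1 h2 h3; case_label l; case_label l'; solve_index.
Qed.

Lemma card_face l : #|face l| = 3.
Proof.
have [h1 h2 h3] := corners_lt l.
rewrite /face card_set3 // -!val_eqE !vtxK //; move: h1 h2 h3; case_label l; solve_index.
Qed.

Definition prev_ord (i : 'I_gon) : 'I_gon :=
  inord (if nat_of_ord i == 0 then gon.-1 else (nat_of_ord i).-1).
Definition next_ord (i : 'I_gon) : 'I_gon := inord (next i).

Lemma prev_ord_spec (i : 'I_gon) :
  (nat_of_ord i = 0 /\ nat_of_ord (prev_ord i) = gon - 1) \/
  (0 < nat_of_ord i /\ nat_of_ord (prev_ord i) = nat_of_ord i - 1).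
Proof.
rewrite /prev_ord inordK; have := ltn_ord i; have := gonE; case: eqP; lia.
Qed.

Lemma next_ordE (i : 'I_gon) : nat_of_ord (next_ord i) = next i.
Proof. by rewrite /next_ord /gon inordK //; have := next_lt (ltn_ord i). Qed.

Definition label_edge (l : label) (w : nat) : nat * nat :=
  match w with
  | 0 => ((corners l).1.1, (corners l).1.2)
  | 1 => ((corners l).1.1, (corners l).2)
  | _ => ((corners l).1.2, (corners l).2)
  end.

Definition edge_partner (l : label) (w : nat) : label :=
  let: (b, i, j) := l in
  match val j, w with
  | 0, 0 => (b, prev_ord i, o1)
  | 0, 1 => (b, i, o1)
  | 0, _ => (b, i, o2)
  | 1, 0 => (b, next_ord i, o0)
  | 1, 1 => (b, i, o0)
  | 1, _ => (b, i, o2)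
  | _, 0 => (~~ b, i, o2)
  | _, 1 => (b, i, o0)
  | _, _ => (b, i, o1)
  end.

Lemma faces_at_label_edge (l : label) w : w < 3 ->
  [set l' | [set vtx (label_edge l w).1; vtx (label_edge l w).2] \subset face l']
    = [set l; edge_partner l w]
  /\ edge_partner l w != l.
Proof.
move=> hw; split; last first.
  move: hw; case_label l; case: w => [|[|[|w]]] //= _ _ _; apply: label_neq => //.
have [h1 h2 h3] := corners_lt l.
have hp : (label_edge l w).1 < nverts /\ (label_edge l w).2 < nverts.
  by case: w hw => [|[|[|]]].
case: hp => hp1 hp2.
apply/setP => l'; rewrite !inE finset.subUset !finset.sub1set !mem_face_vtx //.
move: hp1 hp2 h1 h2 h3; case: w hw => [|[|[|w]]] // _;
case_label l; have := prev_ord_spec i; have := next_ordE i;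
index_facts (prev_ord i); index_facts (next_ord i); intros;
apply/idP/idP.
all: try (case/orP => /eqP ->; solve_index).
all: move=> /andP[m1 m2]; move: m1 m2; case_label l'; solve_index.
Qed.

Lemma stacked_faceP f : f \in stacked_bipyramid -> exists l, f = face l.
Proof. by case/imsetP => l _ ->; exists l. Qed.

Lemma face_in_stacked l : face l \in stacked_bipyramid.
Proof. exact: imset_f. Qed.

Lemma faces_containing (e : {set 'I_nverts}) :
  [set f in stacked_bipyramid | e \subset f] = face @: [set l' | e \subset face l'].
Proof.
apply/setP => f; rewrite inE; apply/andP/imsetP.
  by case=> /stacked_faceP [l' ->] h; exists l' => //; rewrite inE.
by case=> l' h ->; split; [exact: face_in_stacked | rewrite inE in h].
Qed.

Lemma stacked_edgeP e : e \in edges stacked_bipyramid ->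
  exists (l : label) w, w < 3 /\ e = [set vtx (label_edge l w).1; vtx (label_edge l w).2].
Proof.
rewrite inE => /andP[/eqP c2 /existsP[f /andP[/stacked_faceP[l ->] ef]]].
by case: (card2_sub_set3 c2 ef) => ->; [exists l, 0 | exists l, 1 | exists l, 2].
Qed.

Lemma card_faces_at_edge_stacked e : e \in edges stacked_bipyramid ->
  #|[set f in stacked_bipyramid | e \subset f]| = 2.
Proof.
move=> /stacked_edgeP [l [w [hw ->]]].
have [E ne] := faces_at_label_edge l hw.
by rewrite faces_containing E card_imset; [rewrite cards2 eq_sym ne | exact: face_inj].
Qed.

Lemma star_adj_faces (a p q : nat) (l l' : label) :
  a < nverts -> p < nverts -> q < nverts -> p != q -> l != l' ->
  [|| a == (corners l).1.1, a == (corners l).1.2 | a == (corners l).2] ->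
  [|| a == (corners l').1.1, a == (corners l').1.2 | a == (corners l').2] ->
  [|| p == (corners l).1.1, p == (corners l).1.2 | p == (corners l).2] ->
  [|| p == (corners l').1.1, p == (corners l').1.2 | p == (corners l').2] ->
  [|| q == (corners l).1.1, q == (corners l).1.2 | q == (corners l).2] ->
  [|| q == (corners l').1.1, q == (corners l').1.2 | q == (corners l').2] ->
  star_at (vtx a) (face l) (face l').
Proof.
move=> ha hp hq pq ll' a1 a2 p1 p2 q1 q2.
rewrite /star_adj !mem_face_vtx // a1 a2 !andbT.
apply: (@face_adj_common_pair _ _ _ _ (vtx p) (vtx q));
  rewrite ?face_in_stacked ?card_face ?mem_face_vtx //.
  by apply/negP => /eqP /face_inj /eqP; apply/negP.
by rewrite -val_eqE !vtxK.
Qed.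

Lemma ord3P (j : 'I_3) : j = o0 \/ j = o1 \/ j = o2.
Proof.
case: j => [[|[|[|j]]] hj] //.
- by left; apply: val_inj.
- by right; left; apply: val_inj.
- by right; right; apply: val_inj.
Qed.

Ltac neq_label := intros; apply: label_neq; unfold o0, o1, o2; rewrite /= ?eqxx //=.

Ltac revert_mentioning b := repeat match goal with H : context [b] |- _ => revert H end.
Ltac star_edge p q := apply: (@star_adj_faces _ p q); solve [neq_label | solve_index].
Ltac star_edge_cases b p q :=
  apply: (@star_adj_faces _ p q); revert_mentioning b; case: b; solve [neq_label | solve_index].

Lemma apex_star b (i : 'I_gon) l : vtx (apex b i) \in face l ->
  connect (star_at (vtx (apex b i))) (face (b, i, o0)) (face l).
Proof.
have hx : apex b i < nverts by rewrite /apex /nverts; have := ltn_ord i; have := gonE; case: b; lia.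
rewrite mem_face_vtx // => m.
have -> : l = (b, i, l.2).
  move: m hx; index_facts i; case: l => [[b' i'] j']; case: (ord3P j') => [->|[->|->]] /=;
  index_facts i'; case: b; case: b'; solve_index.
index_facts i; move=> *.
case: (ord3P l.2) => [->|[->|->]]; first exact: connect0.
- by apply: connect1; star_edge_cases b (pole b) (apex b i).
- by apply: connect1; star_edge_cases b (equator i) (apex b i).
Qed.

Lemma pole_chain b n : forall i : 'I_gon, nat_of_ord i = n ->
  connect (star_at (vtx (pole b))) (face (b, ord0, o0)) (face (b, i, o0)).
Proof.
elim: n => [|n IH] i hi.
  by rewrite (_ : i = ord0); [exact: connect0 | apply: val_inj].
have hn : n < gon by have := ltn_ord i; lia.
have [i0 v0] : exists i0 : 'I_gon, nat_of_ord i0 = n.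
  by exists (inord n); rewrite inordK.
apply: connect_trans (IH i0 v0) _.
index_facts i0; index_facts i; move=> *.
apply: (@connect_trans _ _ (face (b, i0, o1))).
  by apply: connect1; star_edge_cases b (pole b) (apex b i0).
by apply: connect1; star_edge_cases b (pole b) (equator i).
Qed.

Lemma pole_star b l : vtx (pole b) \in face l ->
  connect (star_at (vtx (pole b))) (face (b, ord0, o0)) (face l).
Proof.
have hp : pole b < nverts by rewrite /pole /nverts; case: b.
rewrite mem_face_vtx // => m.
case: l m => [[b' i'] j'] m.
have eb : b' = b.
  by move: m hp; case: (ord3P j') => [->|[->|->]]; index_facts i'; case: b; case: b'; solve_index.
subst b'.
have hc := pole_chain b (erefl (nat_of_ord i')).
case: (ord3P j') m => [->|[->|->]] m //.
- apply: connect_trans hc _; apply: connect1; index_facts i'; move=> *.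
  star_edge_cases b (pole b) (apex b i').
- exfalso; clear hc; move: m hp; index_facts i'; case: b; solve_index.
Qed.

Lemma equator_star_same (j : 'I_gon) b :
  connect (star_at (vtx (equator j))) (face (true, j, o0)) (face (b, j, o0)) /\
  connect (star_at (vtx (equator j))) (face (true, j, o0)) (face (b, j, o2)).
Proof.
index_facts j; move=> *.
have true2 : connect (star_at (vtx (equator j))) (face (true, j, o0)) (face (true, j, o2)).
  by apply: connect1; star_edge (equator j) (apex true j).
have false2 : connect (star_at (vtx (equator j))) (face (true, j, o0)) (face (false, j, o2)).
  by apply: connect_trans true2 _; apply: connect1; star_edge (equator j) (equator (next j)).
case: b; split => //; try exact: connect0.
by apply: connect_trans false2 _; apply: connect1; star_edge (equator j) (apex false j).
Qed.

Lemma equator_star_prev (j i : 'I_gon) b : next i = j ->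
  connect (star_at (vtx (equator j))) (face (true, j, o0)) (face (b, i, o1)) /\
  connect (star_at (vtx (equator j))) (face (true, j, o0)) (face (b, i, o2)).
Proof.
move=> e; have [same0 _] := equator_star_same j b.
index_facts j; index_facts i; move=> *.
have prev1 : connect (star_at (vtx (equator j))) (face (true, j, o0)) (face (b, i, o1)).
  by apply: connect_trans same0 _; apply: connect1; star_edge_cases b (pole b) (equator j).
split => //.
by apply: connect_trans prev1 _; apply: connect1; star_edge_cases b (equator j) (apex b i).
Qed.

Lemma equator_star (j : 'I_gon) l : vtx (equator j) \in face l ->
  connect (star_at (vtx (equator j))) (face (true, j, o0)) (face l).
Proof.
have he : equator j < nverts by rewrite /equator /nverts; have := ltn_ord j; have := gonE; lia.
rewrite mem_face_vtx // => m.
case: l m => [[b i] jj] m.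
case: (ord3P jj) m => [->|[->|->]] m.
- have -> : i = j.
    by apply: val_inj; move: m he; index_facts i; index_facts j; case: b; solve_index.
  exact: (equator_star_same j b).1.
- have e : next i = j by move: m he; index_facts i; index_facts j; case: b; solve_index.
  exact: (@equator_star_prev j i b e).1.
- have : nat_of_ord i = nat_of_ord j \/ next i = j.
    by move: m he; index_facts i; index_facts j; case: b; solve_index.
  case=> [/val_inj -> | e]; first exact: (equator_star_same j b).2.
  exact: (@equator_star_prev j i b e).2.
Qed.

Lemma vtx_val (v : 'I_nverts) : v = vtx (nat_of_ord v).
Proof. by apply: val_inj; rewrite /= vtxK. Qed.

Lemma nat_vertex_cases a : a < nverts ->
  [\/ exists b, a = pole b,
      exists j : 'I_gon, a = equator j |
      exists b (i : 'I_gon), a = apex b i].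
Proof.
have := gonE; rewrite /nverts => hm hv.
case: (ltnP a 2) => h1.
  by constructor 1; exists (a == 1); rewrite /pole; case: eqP; lia.
case: (ltnP a (2 + gon)) => h2.
  constructor 2; exists (inord (a - 2)); rewrite /equator inordK; lia.
case: (ltnP a (2 + gon + gon)) => h3.
  constructor 3; exists false, (inord (a - 2 - gon)); rewrite /apex inordK; lia.
constructor 3; exists true, (inord (a - 2 - gon - gon)); rewrite /apex inordK; lia.
Qed.

Lemma vertex_cases (v : 'I_nverts) :
  [\/ exists b, v = vtx (pole b),
      exists j : 'I_gon, v = vtx (equator j) |
      exists b (i : 'I_gon), v = vtx (apex b i)].
Proof.
rewrite (vtx_val v).
case: (nat_vertex_cases (ltn_ord v)) => [[b ->]|[j ->]|[b [i ->]]].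
- by constructor 1; exists b.
- by constructor 2; exists j.
- by constructor 3; exists b, i.
Qed.

Lemma star_connected (v : 'I_nverts) f g :
  f \in stacked_bipyramid -> g \in stacked_bipyramid -> v \in f -> v \in g ->
  connect (star_at v) f g.
Proof.
suff [B HB] : exists B, forall l, v \in face l -> connect (star_at v) B (face l).
  move=> /stacked_faceP[l1 ->] /stacked_faceP[l2 ->] h1 h2.
  apply: connect_trans (HB l2 h2).
  by rewrite (sym_connect_sym (star_adj_sym _ v)) HB.
case: (vertex_cases v) => [[b ->]|[j ->]|[b [i ->]]]; eexists.
- exact: pole_star.
- exact: equator_star.
- exact: apex_star.
Qed.

Lemma star_connect_face v x y : connect (star_at v) x y -> connect adjacent x y.
Proof.
apply: connect_sub => a b /andP[h _]; exact: connect1.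
Qed.

Lemma equator_chain n : forall j : 'I_gon, nat_of_ord j = n ->
  connect adjacent (face (true, ord0, o0)) (face (true, j, o0)).
Proof.
elim: n => [|n IH] j hj.
  by rewrite (_ : j = ord0); [exact: connect0 | apply: val_inj].
have hn : n < gon by have := ltn_ord j; lia.
have [j0 v0] : exists j0 : 'I_gon, nat_of_ord j0 = n.
  by exists (inord n); rewrite inordK.
apply: connect_trans (IH j0 v0) _.
apply: (@connect_trans _ _ (face (true, j0, o2))).
  apply: (@star_connect_face (vtx (equator j0))); apply: equator_star.
  by rewrite mem_face_vtx /= /equator ?orbT ?eqxx //; have := gonE; rewrite /nverts; lia.
rewrite (sym_connect_sym (face_adj_sym _)).
apply: (@star_connect_face (vtx (equator j))); apply: equator_star.
have := gonE; index_facts j0; index_facts j; move=> *.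
rewrite mem_face_vtx; solve_index.
Qed.

Lemma faces_connected f g :
  f \in stacked_bipyramid -> g \in stacked_bipyramid -> connect adjacent f g.
Proof.
suff HB : forall l, connect adjacent (face (true, ord0, o0)) (face l).
  move=> /stacked_faceP[l1 ->] /stacked_faceP[l2 ->].
  apply: connect_trans (HB l2).
  by rewrite (sym_connect_sym (face_adj_sym _)) HB.
move=> [[b i] j].
case: (ord3P j) => [->|[->|->]].
- apply: connect_trans (equator_chain (erefl (nat_of_ord i))) _.
  apply: (@star_connect_face (vtx (equator i))); apply: equator_star.
  index_facts i; move=> *; case: b; rewrite mem_face_vtx; solve_index.
- apply: connect_trans (equator_chain (erefl (nat_of_ord (next_ord i)))) _.
  apply: (@star_connect_face (vtx (equator (next_ord i)))); apply: equator_star.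
  have := next_ordE i.
  index_facts i; index_facts (next_ord i); move=> *; case: b; rewrite mem_face_vtx; solve_index.
- apply: connect_trans (equator_chain (erefl (nat_of_ord i))) _.
  apply: (@star_connect_face (vtx (equator i))); apply: equator_star.
  index_facts i; move=> *; case: b; rewrite mem_face_vtx; solve_index.
Qed.

Lemma card_stacked_bipyramid : #|stacked_bipyramid| = 6 * gon.
Proof.
rewrite card_imset; last exact: face_inj.
by rewrite cardT -cardT /label !card_prod card_bool !card_ord; lia.
Qed.

Lemma card_stacked_face : {in stacked_bipyramid, forall f : {set 'I_nverts}, #|f| = 3}.
Proof. by move=> f /stacked_faceP [l ->]; rewrite card_face. Qed.

Lemma stacked_bipyramid_S2 : is_S2_triangulation stacked_bipyramid.
Proof.
split.
- exact: card_stacked_face.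
- move=> v.
  case: (vertex_cases v) => [[b ->]|[j ->]|[b [i ->]]].
  + exists (face (b, ord0, o0)); first exact: face_in_stacked.
    by rewrite mem_face_vtx; case: b; solve_index.
  + exists (face (true, j, o0)); first exact: face_in_stacked.
    by index_facts j; move=> *; rewrite mem_face_vtx; solve_index.
  + exists (face (b, i, o0)); first exact: face_in_stacked.
    by index_facts i; move=> *; rewrite mem_face_vtx; case: b; solve_index.
- exact: card_faces_at_edge_stacked.
- move=> v f g; exact: star_connected.
- split; first exact: faces_connected.
  have := card_edges card_stacked_face card_faces_at_edge_stacked.
  by rewrite card_stacked_bipyramid /nverts; lia.
Qed.

Definition apexes : {set 'I_nverts} := [set v : 'I_nverts | 2 + gon <= v].

Lemma face_apexes l : face l :&: apexes = [set vtx (corners l).2].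
Proof.
have [h1 h2 h3] := corners_lt l.
apply/setP => v; rewrite finset.in_setI mem_face !inE -val_eqE vtxK //.
have hv := ltn_ord v; move: h1 h2 h3 hv; case_label l; intros; apply/idP/idP; solve_index.
Qed.

Lemma card_non_apexes : #|~: apexes| = gon + 2.
Proof.
have le_nverts : gon + 2 <= nverts by rewrite /nverts; lia.
have widen_inj : injective (widen_ord le_nverts) by move=> x y [] /val_inj.
rewrite -[gon + 2]card_ord -(card_imset _ widen_inj); apply: eq_card => v.
rewrite !inE -ltnNge; apply/idP/imsetP => [lt_v | [x _ ->]] /=; last by have := ltn_ord x; lia.
by exists (Ordinal (n := gon + 2) (m := v) ltac:(lia)) => //; apply: val_inj.
Qed.

Lemma stacked_bipyramid_not_realizable : ~ delaunay_realizable stacked_bipyramid.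
Proof.
have apexes_transversal : {in stacked_bipyramid, forall f : {set 'I_nverts}, #|f :&: apexes| = 1}.
  by move=> f /stacked_faceP [l ->]; rewrite face_apexes cards1.
move/(realizable_card_faces_le card_stacked_face card_faces_at_edge_stacked apexes_transversal).
by rewrite card_stacked_bipyramid card_non_apexes gonE; lia.
Qed.

End StackedBipyramid.

Theorem theorem9p1 :
  exists (N : nat -> nat) (T : forall k : nat, {set {set 'I_(N k)}}),
    (forall k, is_S2_triangulation (T k) /\ ~ delaunay_realizable (T k)) /\
    (forall i j, i <> j -> ~ comb_equiv (T i) (T j)).
Proof.
exists nverts, stacked_bipyramid; split.
  by move=> k; split; [exact: stacked_bipyramid_S2 | exact: stacked_bipyramid_not_realizable].
move=> i j ij [sigma [sigma_bij _]]; apply: ij.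
by have := bij_eq_card sigma_bij; rewrite !card_ord /nverts /gon; lia.
Qed.
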